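(* For every integer $n>1$, let $A=1_{n\times n}$ (the all-ones $n\times n$ matrix) and $B=1_{n\times 1}$. Then $(A,B)$ is uncontrollable (indeed its controllability matrix has rank $1$) and its zero-norm distance to controllability equals $r_c(A,B)=n-1$.
   Context: $r_c(A,B)=\min\{\|[\Delta A,\Delta B]\|_0: \Delta A\in\mathbb{R}^{n\times n},\Delta B\in\mathbb{R}^{n\times m},(A+\Delta A,B+\Delta B)\text{ controllable}\}$, where $\|M\|_0$ is the number of nonzero entries of $M$, and controllability means $\operatorname{rank}[B,AB,\dots,A^{n-1}B]=n$. *)

From HB Require Import structures.
From mathcomp Require Import all_boot all_order all_algebra.
From mathcomp Require Import reals.
Set Implicit Arguments. Unset Strict Implicit. Unset Printing Implicit Defensive.
Import Order.TTheory GRing.Theory Num.Theory.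
Local Open Scope ring_scope.

Definition ctrb (R : comRingType) (n m : nat) (A : 'M[R]_n) (B : 'M[R]_(n, m)) :=
  \mxrow_(k < n) (A ^+ k *m B).

Definition controllable (R : fieldType) (n m : nat) (A : 'M[R]_n) (B : 'M[R]_(n, m)) :=
  \rank (ctrb A B) = n.

Definition norm0 (R : ringType) (p q : nat) (M : 'M[R]_(p, q)) : nat :=
  #|[set ij : 'I_p * 'I_q | M ij.1 ij.2 != 0]|.

Definition is_rc (R : fieldType) (n m : nat) (A : 'M[R]_n) (B : 'M[R]_(n, m)) (k : nat) :=
  (exists (dA : 'M[R]_n) (dB : 'M[R]_(n, m)),
      controllable (A + dA) (B + dB) /\ norm0 (row_mx dA dB) = k) /\
  (forall (dA : 'M[R]_n) (dB : 'M[R]_(n, m)),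
      controllable (A + dA) (B + dB) -> (k <= norm0 (row_mx dA dB))%N).

From HB Require Import structures.
From mathcomp Require Import all_boot all_order all_algebra.
From mathcomp Require Import reals zify.
Import GRing.Theory Num.Theory.
Local Open Scope ring_scope.

(* For the all-ones pair, A B = n B, so every Krylov block A^k B is a multiple
   of B and the controllability matrix has rank one.  A perturbation with fewer
   than n - 1 nonzero entries leaves two rows x, y of [A B] untouched; these
   rows stay equal, so e_x - e_y annihilates the perturbed pair from the left.
   Conversely, adding the subdiagonal shift S (n - 1 entries) gives
   A + S = S + B 1^T, a state feedback of the controllable pair (S, B). *)

Section Norm0.
Variable R : nzRingType.
Implicit Types p q : nat.

Lemma norm0E p q (M : 'M[R]_(p, q)) :
  norm0 M = (\sum_i \sum_j (M i j != 0%R))%N.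
Proof.
rewrite pair_big /norm0 -sum1dep_card big_mkcond.
apply: eq_big => // -[i j] _; by case: (M i j != 0).
Qed.

Lemma norm0_row_mx0 p q r (M : 'M[R]_(p, q)) :
  norm0 (row_mx M (0 : 'M_(p, r))) = norm0 M.
Proof.
rewrite !norm0E; apply: eq_bigr => i _; rewrite big_split_ord /=.
rewrite [X in (_ + X)%N]big1 ?addn0 => [|j _]; last by rewrite row_mxEr mxE eqxx.
by apply: eq_bigr => j _; rewrite row_mxEl.
Qed.

Lemma norm0_lt_zero_rows p q (M : 'M[R]_(p, q)) :
  (norm0 M < p.-1)%N -> exists x y : 'I_p, [/\ x != y, row x M = 0 & row y M = 0].
Proof.
rewrite /norm0; set Z := [set _ | _] => ltZ.
pose nz_rows := [set ij.1 | ij in Z].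
have : (1 < #|~: nz_rows|)%N.
  have : (#|nz_rows| <= #|Z|)%N := leq_imset_card _ _.
  have := cardsC nz_rows; rewrite card_ord; lia.
have zero_row z : z \in ~: nz_rows -> row z M = 0.
  move=> z_zero; apply/rowP => j; rewrite !mxE; apply/eqP.
  apply: contraTT z_zero => Mzj.
  by rewrite in_setC negbK; apply/imsetP; exists (z, j); rewrite ?inE.
by case/card_gt1P => x [y [/zero_row x0 /zero_row y0 xy]]; exists x, y.
Qed.
End Norm0.

Section Controllability.
Context {F : fieldType} {n m : nat}.
Implicit Types (A : 'M[F]_n) (B : 'M[F]_(n, m)) (w : 'rV[F]_n).

Lemma mul_ctrb_eq0 A B w :
  w *m ctrb A B = 0 <-> forall k : 'I_n, w *m (A ^+ k *m B) = 0.
Proof.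
rewrite /ctrb mul_mxrow -(mxrow0 (q_ := fun=> m)).
by split => [/eq_mxrowP | /eq_mxrowP].
Qed.

Lemma controllableP A B :
  controllable A B <->
  forall w, (forall k : 'I_n, w *m (A ^+ k *m B) = 0) -> w = 0.
Proof.
rewrite /controllable; split => [rkAB w /mul_ctrb_eq0 /eqP | kerAB].
  have free_AB : row_free (ctrb A B) by rewrite /row_free rkAB.
  by rewrite mulmx_free_eq0 // => /eqP.
apply/eqP; rewrite -/(row_free _) -kermx_eq0; apply/eqP/row_matrixP => i.
by rewrite row0; apply/kerAB/mul_ctrb_eq0; rewrite -row_mul mulmx_ker row0.
Qed.

Lemma left_annihilator_not_controllable A B w :
  w != 0 -> w *m A = 0 -> w *m B = 0 -> ~ controllable A B.
Proof.
move=> /negP w_neq0 wA wB /controllableP ctrl_AB; apply/w_neq0/eqP/ctrl_AB.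
case=> -[|k] _ /=; first by rewrite expr0 mul1mx.
by rewrite exprS -mulmxE !mulmxA wA !mul0mx.
Qed.

Lemma eq_rows_not_controllable A B (x y : 'I_n) :
  x != y -> row x A = row y A -> row x B = row y B -> ~ controllable A B.
Proof.
move=> xy eqA eqB; pose w : 'rV[F]_n := delta_mx 0 x - delta_mx 0 y.
have wE p (X : 'M[F]_(n, p)) : w *m X = row x X - row y X by rewrite mulmxBl -!rowE.
have w_neq0 : w != 0.
  apply/eqP => /rowP /(_ x); rewrite !mxE !eqxx (negbTE xy) subr0 => /eqP.
  by rewrite oner_eq0.
by apply: (left_annihilator_not_controllable _ _ _ w_neq0); rewrite wE ?eqA ?eqB subrr.
Qed.

(* State feedback does not change the annihilators of the Krylov blocks: once
   [w B = 0], we have [w (A + B K) = w A]. *)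
Lemma feedback_krylov_eq0 A B (K : 'M[F]_(m, n)) k w :
  (forall i, (i < k)%N -> w *m ((A + B *m K) ^+ i *m B) = 0) ->
  forall i, (i < k)%N -> w *m (A ^+ i *m B) = 0.
Proof.
elim: k w => // k IHk w wAKB [|i] lt_ik; first by have := wAKB 0%N isT.
have wB : w *m B = 0 by have := wAKB 0%N isT; rewrite expr0 mul1mx.
have wAK : w *m (A + B *m K) = w *m A by rewrite mulmxDr mulmxA wB mul0mx addr0.
rewrite exprS -mulmxE -mulmxA mulmxA; apply: IHk lt_ik => j lt_jk.
by have := wAKB j.+1 lt_jk; rewrite exprS -mulmxE -mulmxA mulmxA wAK.
Qed.

Lemma controllable_feedback A B (K : 'M[F]_(m, n)) :
  controllable A B -> controllable (A + B *m K) B.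
Proof.
move=> /controllableP ctrl_AB; apply/controllableP => w wAKB; apply: ctrl_AB => k.
apply: (feedback_krylov_eq0 A B K n w _ k (ltn_ord k)) => i lt_in.
exact: (wAKB (Ordinal lt_in)).
Qed.

Lemma rank_ctrb_ge A B : (0 < n)%N -> (\rank B <= \rank (ctrb A B))%N.
Proof.
move=> n_gt0; have := mxrowK (fun k : 'I_n => A ^+ k *m B) (Ordinal n_gt0).
rewrite /= expr0 mul1mx -/(ctrb A B) => {1}<-.
by rewrite /submxrow -[X in colsub _ X]mulmx1 -mulmx_colsub mxrankM_maxl.
Qed.

Lemma rank_ctrb_le A B (C : 'M[F]_m) :
  A *m B = B *m C -> (\rank (ctrb A B) <= \rank B)%N.
Proof.
move=> AB; have AkB (k : nat) : A ^+ k *m B = B *m C ^+ k.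
  elim: k => [|k IHk]; first by rewrite !expr0 mul1mx mulmx1.
  by rewrite exprS -mulmxE -mulmxA IHk mulmxA AB -mulmxA mulmxE -exprS.
by rewrite /ctrb (eq_mxrow (fun k => AkB k)) -mul_mxrow mxrankM_maxl.
Qed.

Lemma rank_ctrb_invariant A B (C : 'M[F]_m) :
  (0 < n)%N -> A *m B = B *m C -> \rank (ctrb A B) = \rank B.
Proof.
by move=> n_gt0 AB; apply/eqP; rewrite eqn_leq (@rank_ctrb_le A B C AB) rank_ctrb_ge.
Qed.

End Controllability.

Section ShiftMatrix.
Variables (F : fieldType) (n : nat).

Definition shift_mx : 'M[F]_n := \matrix_(i, j) (i == j.+1 :> nat)%:R.

Lemma shift_mx_pow_mul_const1 k :
  shift_mx ^+ k *m const_mx 1 = \col_(i < n) (k <= i)%:R.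
Proof.
elim: k => [|k IHk]; first by apply/colP => i; rewrite expr0 mul1mx !mxE.
apply/colP => i; rewrite exprS -mulmxE -mulmxA IHk !mxE.
under eq_bigr do rewrite !mxE.
case: i => -[|i] lt_in /=; first by rewrite big1 // => j _; rewrite mul0r.
rewrite (bigD1 (Ordinal (ltnW lt_in))) //= eqxx mul1r big1 ?addr0 // => j ne_ji.
by case: eqP => [[eq_ij]|]; rewrite ?mul0r //; case/eqP: ne_ji; apply: val_inj.
Qed.

(* The Krylov vectors [S^k 1] are the indicators of [k <= i]; consecutive
   differences give the standard basis. *)
Lemma controllable_shift_const1 : controllable shift_mx (const_mx 1 : 'cV[F]_n).
Proof.
apply/controllableP => w wSk; apply/rowP => k; rewrite mxE.
have wSk_le k' : (k' <= n)%N -> w *m (shift_mx ^+ k' *m const_mx 1) = 0 :> 'M_1.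
  rewrite leq_eqVlt => /orP[/eqP eq_k'n | lt_k'n]; last by have := wSk (Ordinal lt_k'n).
  rewrite shift_mx_pow_mul_const1 eq_k'n -[RHS](mulmx0 _ w); congr (_ *m _).
  by apply/colP => i; rewrite !mxE leqNgt ltn_ord mulr0n.
have delta_k : delta_mx k 0 =
    shift_mx ^+ k *m const_mx 1 - shift_mx ^+ k.+1 *m const_mx 1 :> 'cV[F]_n.
  apply/colP => i; rewrite !shift_mx_pow_mul_const1 !mxE eqxx andbT.
  by rewrite [(k <= i)%N]leq_eqVlt eq_sym -val_eqE /=; case: ltngtP; rewrite ?subrr ?subr0.
have := congr1 (fun M : 'M_(1, 1) => M 0 0) (colE k w).
by rewrite delta_k mulmxBr !wSk_le ?(ltnW (ltn_ord k)) ?ltn_ord // subr0 !mxE.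
Qed.

End ShiftMatrix.

Lemma norm0_shift_mx (F : fieldType) n : norm0 (shift_mx F n) = n.-1.
Proof.
have nat_eq0 (b : bool) : (b%:R != 0 :> F) = b by case: b; rewrite ?oner_eq0 ?eqxx.
rewrite norm0E; case: n => [|n'] /=; first by rewrite big_ord0.
rewrite big_ord_recl big1 => [|j _]; last by rewrite mxE nat_eq0.
rewrite add0n -[n' in RHS]card_ord -sum1_card; apply: eq_bigr => i _.
rewrite (bigD1 (widen_ord (leqnSn n') i)) //= big1 => [|j ne_ji].
  by rewrite mxE lift0 nat_eq0 eqxx.
rewrite mxE lift0 nat_eq0 eqSS; case: eqP => // eq_ij.
by case/eqP: ne_ji; apply: val_inj.
Qed.

Lemma controllable_perturbation_norm0_ge (F : fieldType) n m
    (A dA : 'M[F]_n) (B dB : 'M[F]_(n, m)) :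
  (forall x y, row x (row_mx A B) = row y (row_mx A B)) ->
  controllable (A + dA) (B + dB) -> (n.-1 <= norm0 (row_mx dA dB))%N.
Proof.
move=> eq_rows ctrl; rewrite leqNgt; apply/negP => /norm0_lt_zero_rows[x [y [xy x0 y0]]].
have : row x (row_mx (A + dA) (B + dB)) = row y (row_mx (A + dA) (B + dB)).
  by rewrite -add_row_mx !linearD /= x0 y0 !addr0 (eq_rows x y).
rewrite !row_row_mx => /eq_row_mx[eqA eqB].
exact: eq_rows_not_controllable xy eqA eqB ctrl.
Qed.

Theorem mainTheorem6 (R : realType) (n : nat) (hn : (1 < n)%N) :
  let A : 'M[R]_n := const_mx 1 in
  let B : 'M[R]_(n, 1) := const_mx 1 in
  ~ controllable A B /\ \rank (ctrb A B) = 1%N /\ is_rc A B n.-1.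
Proof.
move=> A B; have n_gt0 := ltnW hn.
have AB : A *m B = B *m (n%:R)%:M.
  apply/matrixP => i j; rewrite mul_mx_scalar !mxE.
  by under eq_bigr do rewrite !mxE mul1r; rewrite sumr_const card_ord mulr1.
have rank_B : \rank B = 1%N.
  apply/eqP; rewrite eqn_leq rank_leq_col lt0n mxrank_eq0.
  by apply/eqP => /matrixP /(_ (Ordinal n_gt0) 0) /eqP; rewrite !mxE oner_eq0.
have rank_ctrb : \rank (ctrb A B) = 1%N.
  by rewrite (rank_ctrb_invariant _ _ _ n_gt0 AB) rank_B.
split; first by rewrite /controllable rank_ctrb => n_eq1; rewrite -n_eq1 in hn.
split=> //; split.
  exists (shift_mx R n), 0; rewrite addr0 norm0_row_mx0 norm0_shift_mx; split=> //.
  have -> : A + shift_mx R n = shift_mx R n + B *m const_mx 1.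
    rewrite addrC; congr (_ + _).
    by apply/matrixP => i j; rewrite !mxE big_ord1 !mxE mulr1.
  exact/controllable_feedback/controllable_shift_const1.
move=> dA dB; apply: controllable_perturbation_norm0_ge => x y.
by apply/matrixP => i j; rewrite !mxE; case: splitP => k _; rewrite !mxE.
Qed.
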